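(* Let $G$ be an edge-coloured digraph. Then $\mathscr{X}_G(x)\in\mathrm{QSym}(x)$.
   Context: An edge-coloured digraph is a finite simple digraph $G$ (no loops; for distinct vertices $a,b$ at most one edge from $a$ to $b$) in which every edge is of one of three types: dashed ($a\dashrightarrow b$), solid ($a\rightarrow b$) or double ($a\Rightarrow b$). A proper vertex-colouring is $\kappa:V(G)\to\mathbb{P}$ with $\kappa(a)\ne\kappa(b)$ for dashed edges $(a,b)$, $\kappa(a)<\kappa(b)$ for solid, $\kappa(a)\le\kappa(b)$ for double. $\mathscr{X}_G(x)=\sum_\kappa\prod_{a\in V(G)}x_{\kappa(a)}$ summed over proper vertex-colourings, in commuting variables $x_1,x_2,\dots$. $\mathrm{QSym}(x)$ is the set of bounded-degree formal power series such that for each composition $(\alpha_1,\dots,\alpha_k)$ all monomials $x_{i_1}^{\alpha_1}\cdots x_{i_k}^{\alpha_k}$ with $i_1<\dots<i_k$ have the same coefficient. *)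

From mathcomp Require Import all_boot.
Set Implicit Arguments. Unset Strict Implicit. Unset Printing Implicit Defensive.

Inductive ecol := Dashed | Solid | Double.

(* An edge-coloured digraph on the finite vertex type V is given by
   e : V -> V -> option ecol ; e a b = Some t means there is an edge a -> b
   of type t, None means no edge (so at most one edge from a to b).
   Loops are excluded by a hypothesis of the theorem. *)

(* Proper colouring with colours in nat (the order of colours is what matters). *)
Definition proper (V : finType) (e : V -> V -> option ecol) (k : V -> nat) : bool :=
  [forall a, forall b,
     match e a b with
     | Some Dashed => k a != k b
     | Some Solid => k a < k b
     | Some Double => k a <= k b
     | None => true
     end].

(* Formal power series in commuting variables x_1, x_2, ... with nat
   coefficients, represented by their coefficient function on monomials.
   A monomial is encoded by its exponent sequence s : seq nat, where
   nth 0 s i is the exponent of x_(i+1); trailing zeros are irrelevant. *)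
Definition series := seq nat -> nat.

(* Coefficient of the monomial s in X_G: the number of proper colourings
   kappa : V -> P with #{a | kappa a = i+1} = nth 0 s i for all i.
   Such a colouring only uses colours 1..size s, so it is encoded as
   k : V -> 'I_(size s), with kappa a = k a + 1. *)
Definition chromX (V : finType) (e : V -> V -> option ecol) : series :=
  fun s => #|[set k : {ffun V -> 'I_(size s)} |
               proper e (fun a => nat_of_ord (k a)) &&
               [forall i : 'I_(size s), #|[set a | k a == i]| == nth 0 s i]]|.

(* The monomial x_(i_1)^(al_1) ... x_(i_k)^(al_k) (indices i_t >= 1). *)
Definition mono (idx al : seq nat) : seq nat :=
  mkseq (fun p => if p.+1 \in idx then nth 0 al (index p.+1 idx) else 0)
        (\max_(j <- idx) j).

Definition composition (al : seq nat) : bool := all (fun a => 0 < a) al.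

Definition isQSym (f : series) : Prop :=
  (exists d, forall s, f s != 0 -> sumn s <= d) /\
  (forall al idx idx' : seq nat, composition al ->
     size idx = size al -> sorted ltn idx -> all (fun i => 0 < i) idx ->
     size idx' = size al -> sorted ltn idx' -> all (fun i => 0 < i) idx' ->
     f (mono idx al) = f (mono idx' al)).

From Pilot Require Import Defs.
From mathcomp Require Import all_boot.
From mathcomp Require Import zify.

(* A proper colouring only sees the relative order of its colours, so
   relabelling the colours by a strictly increasing map turns the proper
   colourings with colour-class sizes al bijectively into those with
   sizes x_(i_1)^(al_1) ... x_(i_k)^(al_k): colours i_1 < ... < i_k
   receive the classes and all other colours stay empty.  The degree is
   bounded since every monomial with a nonzero coefficient has degree #|V|. *)

Lemma ord_ltn_mono_inj m n (g : 'I_m -> 'I_n) :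
  (forall i j, (g i < g j) = (i < j)) -> injective g.
Proof.
move=> g_ltn i j gij; apply/val_inj/eqP.
by rewrite eqn_leq leqNgt [j <= i]leqNgt -!g_ltn gij ltnn.
Qed.
Arguments ord_ltn_mono_inj {m n g}.

Section ChromaticCoefficients.

Variables (V : finType) (e : V -> V -> option ecol).

Lemma proper_ltn_eq (k k' : V -> nat) :
  (forall a b, (k' a < k' b) = (k a < k b)) -> Defs.proper e k' = Defs.proper e k.
Proof.
move=> ltk; apply: eq_forallb => a; apply: eq_forallb => b.
case: (e a b) => [[]|] //; first by rewrite !neq_ltn !ltk.
by rewrite leqNgt [RHS]leqNgt ltk.
Qed.

Definition colouring_of (s : seq nat) (k : {ffun V -> 'I_(size s)}) : bool :=
  Defs.proper e (fun a => nat_of_ord (k a)) &&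
  [forall i, #|[set a | k a == i]| == nth 0 s i].

Lemma chromXE s : chromX e s = #|[set k | colouring_of s k]|.
Proof. by []. Qed.

Lemma chromX_neq0_sumn s : chromX e s != 0 -> sumn s = #|V|.
Proof.
rewrite chromXE cards_eq0 => /set0Pn[k]; rewrite inE => /andP[_ /forallP sizes].
rewrite sumnE (big_nth 0) big_mkord -sum1_card (partition_big k predT) //=.
apply: eq_bigr => i _; rewrite -(eqP (sizes i)) -sum1_card.
by apply: eq_bigl => a; rewrite inE.
Qed.

Section Relabelling.

Variables (s t : seq nat) (g : 'I_(size s) -> 'I_(size t)).
Hypothesis g_ltn : forall i j, (g i < g j) = (i < j).
Hypothesis nth_g : forall i, nth 0 t (g i) = nth 0 s i.
Hypothesis nth_off_g : forall j, (forall i, g i != j) -> nth 0 t j = 0.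

Definition relabel (k : {ffun V -> 'I_(size s)}) : {ffun V -> 'I_(size t)} :=
  [ffun a => g (k a)].

Lemma relabel_inj : injective relabel.
Proof.
move=> k1 k2 /ffunP eqk; apply/ffunP => a.
by apply: (ord_ltn_mono_inj g_ltn); have := eqk a; rewrite !ffunE.
Qed.

Lemma colouring_of_relabel k : colouring_of t (relabel k) = colouring_of s k.
Proof.
have class_g i : [set a | relabel k a == g i] = [set a | k a == i].
  by apply/setP => a; rewrite !inE ffunE (inj_eq (ord_ltn_mono_inj g_ltn)).
congr (_ && _).
  by apply: proper_ltn_eq => a b; rewrite !ffunE g_ltn.
apply/idP/idP => /forallP sizes; apply/forallP.
  by move=> i; rewrite -class_g -nth_g.
move=> j.
case: (pickP (fun i => g i == j)) => [i /eqP <- | off_g].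
  by rewrite class_g nth_g sizes.
rewrite nth_off_g => [|i]; last by rewrite off_g.
by rewrite cards_eq0; apply/eqP/setP => a; rewrite !inE ffunE off_g.
Qed.

Lemma colouring_of_range k' : colouring_of t k' -> forall a, exists i, g i = k' a.
Proof.
move=> + a; case/andP=> _ /forallP/(_ (k' a)).
case: (pickP (fun i => g i == k' a)) => [i /eqP | off_g]; first by exists i.
rewrite nth_off_g => [|i]; last by rewrite off_g.
by rewrite cards_eq0 => /eqP/setP/(_ a); rewrite !inE eqxx.
Qed.

Lemma chromX_relabel : chromX e s = chromX e t.
Proof.
rewrite !chromXE -(card_imset _ relabel_inj); apply: eq_card => k'.
rewrite inE; apply/imsetP/idP => [[k] | colk'].
  by rewrite inE -colouring_of_relabel => colk ->.
have [h relabel_h] := fin_all_exists (colouring_of_range k' colk').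
have k'E : k' = relabel [ffun a => h a].
  by apply/ffunP => a; rewrite !ffunE relabel_h.
by exists [ffun a => h a]; rewrite // inE -colouring_of_relabel -k'E.
Qed.

End Relabelling.

Section MonomialShift.

Variables (al idx : seq nat).
Hypothesis size_idx : size idx = size al.
Hypothesis sorted_idx : sorted ltn idx.
Hypothesis idx_gt0 : all (fun i => 0 < i) idx.

Lemma nth_idx_gt0 i : i < size idx -> 0 < nth 0 idx i.
Proof. exact: (all_nthP 0 idx_gt0). Qed.

Lemma nth_idx_ltn i j : i < size idx -> j < size idx ->
  (nth 0 idx i < nth 0 idx j) = (i < j).
Proof.
move=> ilt jlt; case: (ltngtP i j) => [ij | ji | ->]; last by rewrite ltnn.
  exact: (sorted_ltn_nth ltn_trans).
by apply/negbTE; rewrite -leqNgt ltnW // (sorted_ltn_nth ltn_trans).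
Qed.

Lemma size_mono : size (mono idx al) = \max_(j <- idx) j.
Proof. exact: size_mkseq. Qed.

Lemma mono_position_lt (i : 'I_(size al)) : (nth 0 idx i).-1 < size (mono idx al).
Proof.
have ilt : i < size idx by rewrite size_idx.
have le_max := @leq_bigmax_seq _ idx predT id _ (mem_nth 0 ilt) isT.
by rewrite size_mono; apply: leq_trans le_max; rewrite prednK ?nth_idx_gt0.
Qed.

Definition mono_position (i : 'I_(size al)) : 'I_(size (mono idx al)) :=
  Ordinal (mono_position_lt i).

Lemma chromX_mono : chromX e (mono idx al) = chromX e al.
Proof.
have uniq_idx : uniq idx := sorted_uniq ltn_trans ltnn sorted_idx.
symmetry; apply: (@chromX_relabel _ _ mono_position) => [i j | i | j off_pos] /=.
- have ilt : i < size idx by rewrite size_idx.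
  have jlt : j < size idx by rewrite size_idx.
  have := nth_idx_gt0 _ ilt; have := nth_idx_gt0 _ jlt.
  by rewrite -(nth_idx_ltn _ _ ilt jlt); lia.
- have ilt : i < size idx by rewrite size_idx.
  rewrite nth_mkseq -?size_mono ?mono_position_lt //.
  by rewrite prednK ?nth_idx_gt0 // mem_nth // index_uniq.
- have j_lt_max : j < \max_(i <- idx) i by rewrite -size_mono.
  rewrite /mono nth_mkseq //; case: ifP => // j_in.
  have jlt : index j.+1 idx < size al by rewrite -size_idx index_mem.
  by have /eqP[] := off_pos (Ordinal jlt); apply: val_inj; rewrite /= nth_index.
Qed.

End MonomialShift.

End ChromaticCoefficients.

Theorem mainTheorem6 (V : finType) (e : V -> V -> option ecol)
  (noloop : forall a, e a a = None) :
  isQSym (chromX e).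
Proof.
split; first by exists #|V| => s /chromX_neq0_sumn ->.
move=> al idx idx' _ size_idx sorted_idx idx_gt0 size_idx' sorted_idx' idx'_gt0.
by rewrite !chromX_mono.
Qed.
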